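(* Let $L\subset\mathbb{R}$ be a real multiquadratic field of rank $t$, i.e. $L/\mathbb{Q}$ is Galois with $\mathrm{Gal}(L/\mathbb{Q})\cong(\mathbb{Z}/2\mathbb{Z})^t$, and let $\epsilon_1,\dots,\epsilon_{2^t-1}$ be the fundamental units of the $2^t-1$ quadratic subfields of $L$. Then the subspace of $\mathbb{F}_2^{2^t}$ spanned by the signatures (in $L$) of $-1,\epsilon_1,\dots,\epsilon_{2^t-1}$ has dimension at most $t+1$, and this maximum value $t+1$ is attained when every $\epsilon_i$ has norm $-1$.
   Context: For a totally real field $F$ of degree $n$ and $0\neq\alpha\in F$, the signature of $\alpha$ is the vector in $\mathbb{F}_2^n$ whose entry at a real embedding $v$ of $F$ is $0$ if $v(\alpha)>0$ and $1$ if $v(\alpha)<0$. *)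

From HB Require Import structures.
From mathcomp Require Import all_boot all_order all_algebra all_fingroup all_solvable all_field.
From mathcomp Require Import reals.
Set Implicit Arguments. Unset Strict Implicit. Unset Printing Implicit Defensive.
Import Order.TTheory GRing.Theory Num.Theory.
Local Open Scope ring_scope.

Definition integral_over_Z (L : fieldExtType rat) (x : L) : Prop :=
  exists p : {poly int}, p \is monic /\ root (map_poly intr p) x.

Definition unit_of_integers (L : fieldExtType rat) (K : {subfield L}) (u : L) : Prop :=
  [/\ u \in K, u != 0, integral_over_Z u & integral_over_Z u^-1].

Definition fundamental_unit (L : fieldExtType rat) (K : {subfield L}) (eps : L) : Prop :=
  unit_of_integers K eps /\
  forall u, unit_of_integers K u -> exists (b : bool) (k : int), u = (-1) ^+ b * eps ^ k.

(* The real embeddings of a Galois field L, given one real embedding iota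
   (L ⊂ R), are exactly iota \o sigma, sigma in Gal(L/Q). *)
Definition signature (L : splittingFieldType rat) (R : realType) (iota : {rmorphism L -> R})
  (a : L) : {ffun gal_of {:L} -> ('F_2)^o} :=
  [ffun s : gal_of {:L} => if iota (s a) < 0 then 1 else 0].

From HB Require Import structures.
From mathcomp Require Import all_boot all_order all_algebra all_fingroup all_solvable all_field.
From mathcomp Require Import reals.
Set Implicit Arguments. Unset Strict Implicit. Unset Printing Implicit Defensive.
Import Order.TTheory GRing.Theory Num.Theory.
Local Open Scope ring_scope.

(* Let K be a quadratic subfield and H = Gal(L/K), of index 2 in G = Gal(L/Q).
   Every s in G acts on K either trivially or as a fixed s0 notin H, so the
   signature of e in K is a combination of the all-ones vector sig(-1) and of
   the F_2-character chi_K = [s notin H] of G.  As G = (Z/2)^t, the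
   F_2-characters of G span a space of dimension at most t: this gives the
   upper bound.  If N(e) = e * s0(e) = -1, the two conjugates of e have
   opposite signs and chi_K itself lies in the span.  The 2^t - 1 characters
   chi_K are distinct and nonzero, so they span a space of dimension at least
   t; it vanishes at 1, hence misses sig(-1). *)

Lemma dimv_add_line (F : fieldType) (vT : vectType F) (U : {vspace vT}) v :
  v \notin U -> \dim (<[v]> + U) = (\dim U).+1.
Proof.
move=> notUv; have v_neq0 : v != 0 by apply: contraNneq notUv => ->; apply: mem0v.
rewrite dimv_disjoint_sum ?dim_vline ?v_neq0 //; apply/eqP; rewrite -subv0.
apply/subvP => _ /memv_capP[/vlineP[k ->] Ukv]; rewrite memv0 scaler_eq0.
by apply/orP; left; apply: contraNT notUv => k_neq0; rewrite -(scalerK k_neq0 v) rpredZ.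
Qed.

Lemma dimv_ge_card (F : finFieldType) (T : finType) (U : {vspace {ffun T -> F^o}}) n :
  (#|F| ^ n <= #|U|)%N -> (n <= \dim U)%N.
Proof. by rewrite card_vspace leq_exp2l ?finNzRing_gt1. Qed.

Lemma span_ffun_eq0 (T : finType) (F : fieldType) (X : seq {ffun T -> F^o}) (x : T) :
  {in X, forall f : {ffun T -> F^o}, f x = 0} ->
  {in <<X>>%VS, forall f : {ffun T -> F^o}, f x = 0}.
Proof.
move=> X0 f /(@coord_span _ _ _ (in_tuple X)) ->; rewrite sum_ffunE big1 // => i _.
by rewrite ffunE X0 ?scaler0 ?mem_nth.
Qed.

Lemma Z2_cases (z : 'Z_2) : z = 0 \/ z = 1.
Proof. by case: z => [[|[|//]] ?]; [left | right]; apply: val_inj. Qed.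

Lemma F2_chars_dim (gT : finGroupType) (t : nat) :
    ([set: gT] \isog [set: 'rV['Z_2]_t])%g ->
  exists2 W : {vspace {ffun gT -> ('F_2)^o}}, (\dim W <= t)%N &
    forall chi : {ffun gT -> ('F_2)^o},
      {morph chi : x y / (x * y)%g >-> x + y} -> chi \in W.
Proof.
case/isogP=> f injf fT.
(* ['Z_2] and ['F_2] are both ['I_2], with the same addition. *)
pose coord_char j : {ffun gT -> ('F_2)^o} := [ffun x => f x 0 j : 'F_2].
exists <<[seq coord_char j | j : 'I_t]>>%VS.
  by rewrite (leq_trans (dim_span _)) // size_map size_enum_ord.
move=> chi chiM; pose psi w := chi (invm injf w).
have psiD : {morph psi : v w / v + w}.
  by move=> v w; rewrite /psi -chiM -morphM ?fT ?inE.
have psi0 : psi 0 = 0 by apply: (addrI (psi 0)); rewrite -psiD !addr0.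
have -> : chi = \sum_j psi (delta_mx 0 j) *: coord_char j.
  apply/ffunP => x; rewrite sum_ffunE.
  have -> : chi x = psi (f x) by rewrite /psi invmE ?inE.
  rewrite {1}(row_sum_delta (f x)) (big_morph psi psiD psi0).
  apply: eq_bigr => j _; rewrite !ffunE.
  by case: (Z2_cases (f x 0 j)) => ->; rewrite ?scale0r ?psi0 ?scaler0 // scale1r; apply/esym/mulr1.
by apply: rpred_sum => j _; apply/rpredZ/memv_span; rewrite map_f ?mem_enum.
Qed.

Section IndexTwo.
Local Open Scope group_scope.
Variable gT : finGroupType.

Definition index2_char (H : {set gT}) : {ffun gT -> ('F_2)^o} := [ffun x => (x \notin H)%:R].

Lemma index2_char_inj : injective index2_char.
Proof.
move=> A B /ffunP eqAB; apply/setP => x; have := eqAB x; rewrite !ffunE.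
by case: (x \in A); case: (x \in B) => //= /eqP.
Qed.

Variables G H : {group gT}.
Hypotheses (sHG : H \subset G) (iHG : #|G : H| = 2).

Lemma index2_mem_mul : {in G &, forall x y, (x * y \in H) = ((x \in H) == (y \in H))}.
Proof.
move=> x y Gx Gy; have [Hx|notHx] := boolP (x \in H); first by rewrite groupMl.
have [Hy|notHy] := boolP (y \in H); first by rewrite groupMr // (negbTE notHx).
have: x \in H :* y^-1 by rewrite (rcoset_index2 sHG iHG) !inE ?groupV ?notHx ?notHy.
by case/rcosetP=> h Hh ->; rewrite mulgKV Hh.
Qed.

Lemma index2_charM : {in G &, {morph index2_char H : x y / x * y >-> (x + y)%R}}.
Proof.
move=> x y Gx Gy; rewrite !ffunE index2_mem_mul //.
by case: (x \in H); case: (y \in H) => //=; rewrite ?addr0 ?add0r //; apply/eqP.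
Qed.

End IndexTwo.

Lemma index_gal (F0 : fieldType) (L : splittingFieldType F0) (k K E : {subfield L}) :
  (k <= K <= E)%VS -> galois k E -> #|'Gal(E / k) : 'Gal(E / K)|%g = \dim_k K.
Proof.
move=> /andP[skK sKE] galkE; have galKE : galois K E by apply: galoisS galkE; rewrite skK.
rewrite -divgS ?galS // -!galois_dim //.
have /dvdnP[a dE] := field_dimS sKE; have /dvdnP[b dK] := field_dimS skK.
have a_gt0 : (0 < a)%N by have := adim_gt0 E; rewrite dE muln_gt0 => /andP[].
by rewrite dE dK mulnA !mulnK ?adim_gt0 // -mulnA mulnK ?mulKn // -dK adim_gt0.
Qed.

Lemma mem_gal1 (F0 : fieldType) (L : splittingFieldType F0) (E : {subfield L})
  (x : gal_of E) : x \in 'Gal(E / 1%AS)%g.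
Proof. by rewrite gal_kAut ?sub1v // kAut1E limg_gal subvv. Qed.

Lemma gal_subfield_inj (F0 : fieldType) (L : splittingFieldType F0) :
  galois 1 {:L} -> injective (fun K : {subfield L} => 'Gal({:L} / K)%g).
Proof.
move=> galL K1 K2 /= eqGal; apply/val_inj.
have galKL (K : {subfield L}) : galois K {:L} by apply: galoisS galL; rewrite sub1v subvf.
by rewrite /= -(galois_fixedField (galKL K1)) eqGal (galois_fixedField (galKL K2)).
Qed.

Section QuadraticSubfield.
Variables (L : splittingFieldType rat) (K : {subfield L}).
Hypotheses (galL : galois 1 {:L}) (dimK : \dim K = 2%N).

Local Notation H := 'Gal({:L} / K)%g.

Lemma gal_quadratic_index : #|'Gal({:L} / 1%AS) : H|%g = 2.
Proof. by rewrite index_gal ?sub1v ?subvf // dimv1 divn1. Qed.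

Lemma gal_quadratic_mem_mul (s t : gal_of {:L}) :
  ((s * t)%g \in H) = ((s \in H) == (t \in H)).
Proof. by rewrite (index2_mem_mul (galS _ (sub1v K)) gal_quadratic_index) ?mem_gal1. Qed.

Lemma gal_quadratic_charM : {morph index2_char H : s t / (s * t)%g >-> s + t}.
Proof. by move=> s t; rewrite (index2_charM (galS _ (sub1v K)) gal_quadratic_index) ?mem_gal1. Qed.

Lemma gal_quadratic_exists_notin : exists s0, s0 \notin H.
Proof.
have : ~~ ('Gal({:L} / 1%AS) \subset H)%g by rewrite -indexg_gt1 gal_quadratic_index.
by case/subsetPn => s0 _ notHs0; exists s0.
Qed.

Variable s0 : gal_of {:L}.
Hypothesis notHs0 : s0 \notin H.

Lemma gal_quadratic_act (s : gal_of {:L}) :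
  {in K, forall e, s e = if s \in H then e else s0 e}.
Proof.
move=> e Ke; have [Hs | notHs] := ifPn; first exact: fixed_gal (subvf K) Hs Ke.
have Hss0 : (s * s0^-1)%g \in H.
  by rewrite gal_quadratic_mem_mul groupV (negbTE notHs) (negbTE notHs0).
by rewrite -(mulgKV s0 s) galM ?memvf // (fixed_gal (subvf K) Hss0 Ke).
Qed.

(* s0 e is fixed by every h in H, because s0 * h acts on K as s0 does. *)
Lemma gal_quadratic_stable : {in K, forall e, s0 e \in K}.
Proof.
move=> e Ke; have galKL : galois K {:L} by apply: galoisS galL; rewrite sub1v subvf.
rewrite -(galois_fixedField galKL); apply/fixedFieldP => [|h Hh]; first exact: memvf.
have notHs0h : (s0 * h)%g \notin H by rewrite gal_quadratic_mem_mul Hh (negbTE notHs0).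
by rewrite -galM ?memvf // (gal_quadratic_act (s0 * h)%g) // (negbTE notHs0h).
Qed.

Lemma gal_quadratic_restrict (x : gal_of K) : x = 1%g \/ {in K, x =1 s0}.
Proof.
have homx : kHom 1 K x by rewrite -gal_kHom ?sub1v ?mem_gal1.
have [|s _ xs] := kHom_to_gal _ (normalFieldf 1) homx; first by rewrite sub1v subvf.
have sK := gal_quadratic_act s; case: (s \in H) sK => sK; [left | right].
  by apply/eqP/gal_eqP => a Ka; rewrite xs // sK // gal_id.
by move=> a Ka; rewrite xs // sK.
Qed.

Lemma galNorm_quadratic : {in K, forall e, galNorm 1 K e = e * s0 e}.
Proof.
move=> e Ke.
have s0K : (s0 @: K <= K)%VS.
  by apply/subvP => _ /memv_imgP[a Ka ->]; apply: gal_quadratic_stable.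
pose x0 := gal K s0; have x0E : {in K, x0 =1 s0} := galK s0K.
have x0_neq1 : x0 != 1%g.
  apply: contra notHs0 => /eqP x01; rewrite gal_kHom ?subvf //.
  by apply/kAHomP => a Ka; rewrite -x0E // x01 gal_id.
have galKE : 'Gal(K / 1%AS)%g =i [set 1%g; x0].
  move=> x; rewrite mem_gal1 !inE; case: (gal_quadratic_restrict x) => [->|xs].
    by rewrite eqxx.
  by apply/esym/orP; right; apply/gal_eqP => a Ka; rewrite xs ?x0E.
rewrite /galNorm (eq_bigl _ _ galKE) big_setU1 ?big_set1 ?inE 1?eq_sym //=.
by rewrite gal_id x0E.
Qed.

Variables (R : realType) (iota : {rmorphism L -> R}).

Lemma signature_quadratic e : e \in K ->
  signature iota e = signature iota e 1%g *: signature iota (-1)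
                     + (signature iota e 1%g + signature iota e s0) *: index2_char H.
Proof.
move=> Ke; apply/ffunP => s.
have sigE : signature iota e s = if s \in H then signature iota e 1%g else signature iota e s0.
  by rewrite !ffunE gal_quadratic_act // gal_id; case: (s \in H).
move: (signature iota e 1%g) (signature iota e s0) sigE => a b ->.
rewrite !ffunE !rmorphN1 oppr_lt0 ltr01; case: (s \in H) => /=.
  by rewrite scaler0 addr0; apply/esym/mulr1.
by rewrite -scalerDl addrA (addrr_pchar2 (pchar_Fp _)) ?add0r //; apply/esym/mulr1.
Qed.

Lemma signature_norm_neg e : e \in K -> galNorm 1 K e = -1 ->
  signature iota e 1%g + signature iota e s0 = 1.
Proof.
move=> Ke; rewrite galNorm_quadratic // => normE.
have : iota e * iota (s0 e) < 0 by rewrite -rmorphM normE rmorphN1 oppr_lt0 ltr01.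
rewrite !ffunE gal_id mulr_lt0 => /and3P[_ _].
by case: (iota e < 0); case: (iota (s0 e) < 0) => //= _; rewrite ?addr0 ?add0r.
Qed.

End QuadraticSubfield.

Section SignatureSpan.
Variables (L : splittingFieldType rat) (R : realType) (iota : {rmorphism L -> R}).
Variables (n : nat) (Ks : 'I_n -> {subfield L}) (eps : 'I_n -> L).
Hypotheses (galL : galois 1 {:L}) (dimKs : forall i, \dim (Ks i) = 2%N).
Hypothesis epsK : forall i, eps i \in Ks i.

Let V := <<signature iota (-1) :: [seq signature iota (eps i) | i : 'I_n]>>%VS.
Let chi i := index2_char 'Gal({:L} / Ks i)%g.

Lemma signatureN1 (s : gal_of {:L}) : signature iota (-1) s = 1.
Proof. by rewrite ffunE !rmorphN1 oppr_lt0 ltr01. Qed.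

Lemma signatureN1_in_span : signature iota (-1) \in V.
Proof. by rewrite memv_span ?mem_head. Qed.

Lemma signature_in_span i : signature iota (eps i) \in V.
Proof. by rewrite memv_span // inE image_f ?orbT. Qed.

Lemma dim_signature_span_le t :
  ([set: gal_of {:L}] \isog [set: 'rV['Z_2]_t])%g -> (\dim V <= t.+1)%N.
Proof.
case/F2_chars_dim => W dimW charW.
have VW : (V <= <[signature iota (-1)]> + W)%VS.
  apply/span_subvP => _ /predU1P[-> | /imageP[i _ ->]].
    exact: subvP (addvSl _ _) _ (memv_line _).
  have [s0 notHs0] := gal_quadratic_exists_notin galL (dimKs i).
  rewrite (signature_quadratic galL (dimKs i) notHs0 iota (epsK i)).
  by rewrite memv_add ?rpredZ ?memv_line ?charW //; apply: gal_quadratic_charM.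
apply: leq_trans (dimvS VW) (leq_trans (dimv_add_leqif _ _).1 _).
by rewrite dim_vline; apply: leq_add (leq_b1 _) dimW.
Qed.

Lemma index2_char_in_span i : galNorm 1 (Ks i) (eps i) = -1 -> chi i \in V.
Proof.
move=> normE; have [s0 notHs0] := gal_quadratic_exists_notin galL (dimKs i).
have := signature_quadratic galL (dimKs i) notHs0 iota (epsK i).
rewrite (signature_norm_neg galL (dimKs i) notHs0 iota (epsK i) normE) scale1r => sigE.
rewrite -(addKr (signature iota (eps i) 1%g *: signature iota (-1)) (chi i)) -sigE.
by rewrite rpredD ?rpredN ?rpredZ ?signatureN1_in_span ?signature_in_span.
Qed.

Lemma dim_signature_span_ge t : injective Ks ->
  (forall i, galNorm 1 (Ks i) (eps i) = -1) -> (2 ^ t <= n.+1)%N -> (t.+1 <= \dim V)%N.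
Proof.
move=> injKs normE le_2t_n.
pose U := <<[seq chi i | i : 'I_n]>>%VS.
have UV : (U <= V)%VS by apply/span_subvP => _ /mapP[i _ ->]; apply: index2_char_in_span.
have U_eq0 : {in U, forall f : {ffun gal_of {:L} -> ('F_2)^o}, f 1%g = 0}.
  by apply: span_ffun_eq0 => _ /mapP[i _ ->]; rewrite ffunE group1.
have notUs : signature iota (-1) \notin U.
  by apply/negP => /U_eq0; rewrite signatureN1 => /eqP; rewrite oner_eq0.
have chi_neq0 i : chi i != 0.
  have [s0 notHs0] := gal_quadratic_exists_notin galL (dimKs i).
  by apply/negP => /eqP/ffunP/(_ s0); rewrite !ffunE notHs0 => /eqP; rewrite oner_eq0.
have injchi : injective chi by move=> i j /index2_char_inj/(gal_subfield_inj galL)/injKs.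
pose chis0 := (0 : {ffun gal_of {:L} -> ('F_2)^o}) |: [set chi i | i : 'I_n].
have card_chi : #|chis0| = n.+1.
  rewrite cardsU1 card_imset // card_ord; case: imsetP => // -[i _ /esym/eqP].
  by rewrite (negbTE (chi_neq0 i)).
have chi_U : chis0 \subset U.
  apply/subsetP => _ /setU1P[-> | /imsetP[i _ ->]]; first exact: mem0v.
  by rewrite memv_span ?map_f ?mem_enum.
have dimU : (t <= \dim U)%N.
  by apply: dimv_ge_card; rewrite card_Fp // (leq_trans le_2t_n) // -card_chi subset_leq_card.
have sUV : (<[signature iota (-1)]> + U <= V)%VS.
  by rewrite subv_add -memvE signatureN1_in_span.
by rewrite (leq_trans _ (dimvS sUV)) // dimv_add_line.
Qed.

End SignatureSpan.

Theorem proposition6p2 (L : splittingFieldType rat) (R : realType)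
  (iota : {rmorphism L -> R}) (t : nat)
  (HGal : galois 1%AS {:L})
  (Hrank : ('Gal({:L} / 1%AS) \isog [set: 'rV['Z_2]_t])%g)
  (Ks : 'I_(2 ^ t - 1) -> {subfield L}) (eps : 'I_(2 ^ t - 1) -> L)
  (HKinj : injective Ks)
  (HKquad : forall i, \dim (Ks i) = 2%N)
  (Heps : forall i, fundamental_unit (Ks i) (eps i)) :
  let V := <<signature iota (-1) :: [seq signature iota (eps i) | i : 'I_(2 ^ t - 1)]>>%VS in
  (\dim V <= t.+1)%N /\
  ((forall i, galNorm 1%AS (Ks i) (eps i) = -1) -> \dim V = t.+1).
Proof.
move=> V; have epsK i : eps i \in Ks i by case: (Heps i) => [[]].
have GT : 'Gal({:L} / 1%AS)%g = [set: gal_of {:L}] by apply/setP => s; rewrite inE mem_gal1.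
rewrite GT in Hrank; have le_dimV := dim_signature_span_le iota HGal HKquad epsK Hrank.
split=> // normE; apply/eqP; rewrite eqn_leq le_dimV /=.
apply: (dim_signature_span_ge iota HGal HKquad epsK HKinj normE).
by rewrite subn1 prednK ?expn_gt0.
Qed.
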